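(* Fix a horizon $T<\infty$ and assume the prefix space $\mathcal{X}_{\le T+1}$ is finite, that $0<R_{\min}\le r(z)\le R_{\max}<\infty$ for all prefixes $z$, that $0<\alpha_t<1$ for all $t$, and that $\sum_{x'}p(x'\mid z)=1$ for every prefix $z$. Let $\beta_0,\beta_1,\dots,\beta_T\ge 0$ be fixed (deterministic) powers. Run PB-SMC with $N$ particles, and let $\mathcal{P}_t$, $W_t$ be its weighted pool at round $t$. Then for every fixed $t\le T$ and every bounded $f:\mathcal{X}_{\le T+1}\to\mathbb{R}$, $$\frac{\sum_{z\in\mathcal{P}_t}W_t(z)f(z)}{\sum_{z\in\mathcal{P}_t}W_t(z)}\xrightarrow[N\to\infty]{p}\mathbb{E}_{\pi_t^{(\beta_t)}}[f(X)].$$ Moreover, if instead the powers are computed adaptively by $\beta_{t+1}=\beta_t+\gamma\bigl(1-(\sigma_t-1/C_t)\bigr)$ (with $\gamma>0$, $C_t=|\mathcal{P}_t|$, $a_z=r(z)/\sum_{y\in\mathcal{P}_t}r(y)$ and $\sigma_t=\sum_{z\in\mathcal{P}_t}a_z^2$, sums over the multiset), then each $\beta_t$ converges in probability as $N\to\infty$ to a deterministic limit $\beta_t^*$, and the same convergence holds with target $\pi_t^{(\beta_t^* )}$.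
   Context: Let $x_0$ be a fixed prompt and let reasoning steps take values in some set. A prefix is a finite sequence $z=x_{1:d}=(x_1,\dots,x_d)$ with $d\ge1$; $\mathrm{len}(z)=d$. $\mathcal{X}_s$ is the set of prefixes of length exactly $s$ and $\mathcal{X}_{\le T+1}=\bigcup_{s=1}^{T+1}\mathcal{X}_s$. A language model gives a normalized next-step kernel $p(x_d\mid x_{1:d-1})$ (conditioning on $x_0$ suppressed) and prefix probability $p(x_{1:d})=\prod_{s=1}^d p(x_s\mid x_{1:s-1})$. The parent of $z=x_{1:d}$ is $\mathrm{pa}(z)=x_{1:d-1}$ if $d\ge2$ and $\mathrm{pa}(z)=x_0$ if $d=1$. $r$ is a positive score function on prefixes with the convention $r(x_0)=1$. Powered target: for $\beta\ge0$ and round $t$, $\widetilde\pi_t^{(\beta)}(z)=p(z)\,r(z)^{\beta}\,\mathbf{1}\{\mathrm{len}(z)\le t+1\}$ on $\mathcal{X}_{\le T+1}$, and $\pi_t^{(\beta)}=\widetilde\pi_t^{(\beta)}/\sum_{y}\widetilde\pi_t^{(\beta)}(y)$. Correction factor: for $t\ge1$, $$F_t(z)=\frac{\left(\frac{r(z)}{r(\mathrm{pa}(z))}\right)^{\beta_{t-1}}r(z)^{\beta_t-\beta_{t-1}}}{\alpha_t\mathbf{1}\{\mathrm{len}(z)\ge2\}+(1-\alpha_t)\left(\frac{r(z)}{r(\mathrm{pa}(z))}\right)^{\beta_{t-1}}\mathbf{1}\{\mathrm{len}(z)\le t\}}.$$ PB-SMC (Power Backtrack SMC): $\mathcal{P}_0$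 is a multiset of $N$ i.i.d. one-step samples $x_1\sim p(\cdot\mid x_0)$ with weights $W_0(z)=r(z)^{\beta_0}$. For $t=1,\dots,T$: (i) draw $N$ parents i.i.d. from $\mathcal{P}_{t-1}$ with probabilities proportional to $W_{t-1}$ and extend each parent $u$ by one step $x'\sim p(\cdot\mid u)$, giving the multiset $\mathcal{B}_t$ of $N$ new children; (ii) independently draw a multiset $S_t$ of $Nt$ elements i.i.d. from $\mathcal{P}_{t-1}$ with probabilities proportional to $W_{t-1}$ (no extension); (iii) set $\mathcal{P}_t=S_t\uplus\mathcal{B}_t$ with weights $W_t(z)=\alpha_tF_t(z)$ for $z\in\mathcal{B}_t$ and $W_t(z)=(1-\alpha_t)F_t(z)/t$ for $z\in S_t$. *)

From HB Require Import structures.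
From mathcomp Require Import all_boot all_order all_algebra.
From mathcomp Require Import all_classical all_reals all_analysis.
Set Implicit Arguments. Unset Strict Implicit. Unset Printing Implicit Defensive.
Import Order.TTheory GRing.Theory Num.Theory.
Import numFieldNormedType.Exports.
Local Open Scope classical_set_scope.
Local Open Scope ring_scope.

(* Finitely supported distributions (the law of a finite randomized    *)
(* program): a list of (probability, outcome) pairs.                   *)
Section FDist.
Variable R : realType.

Definition fdist (A : Type) := seq (R * A).

Definition fret (A : Type) (a : A) : fdist A := [:: (1, a)].

Definition fbind (A B : Type) (d : fdist A) (k : A -> fdist B) : fdist B :=
  flatten [seq [seq (pa.1 * qb.1, qb.2) | qb <- k pa.2] | pa <- d].

Definition fprob (A : Type) (d : fdist A) (E : A -> bool) : R :=
  \sum_(pa <- d | E pa.2) pa.1.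

(* k i.i.d. draws from d, collected in a sequence (a multiset) *)
Definition fiid (A : Type) (k : nat) (d : fdist A) : fdist (seq A) :=
  iter k (fun acc => fbind acc (fun l => fbind d (fun x => fret (x :: l))))
       (fret [::]).

Definition conv_prob (A : Type) (d : nat -> fdist A) (X : A -> R) (c : R) : Prop :=
  forall eps : R, 0 < eps ->
    (fun N : nat => fprob (d N) (fun a => eps < `|X a - c|)) @ \oo --> (0 : R).
End FDist.
Arguments fret {R A}.
Arguments fbind {R A B}.
Arguments fiid {R A}.

(* The model: steps in a finite type S; a prefix x_{1:d} is a sequence *)
(* [:: x_1; ...; x_d] (d >= 1); the empty sequence stands for x_0.     *)
(* p u x = p(x | u) ; r is the score on prefixes, r(x_0) := 1.         *)
Section PBSMC.
Variables (R : realType) (S : finType).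
Variable p : seq S -> S -> R.
Variable r : seq S -> R.

Definition rx (z : seq S) : R := if z is [::] then 1 else r z.

Definition pa (z : seq S) : seq S := take (size z).-1 z.

Fixpoint prefprob_aux (u rest : seq S) : R :=
  if rest is x :: rest' then p u x * prefprob_aux (rcons u x) rest' else 1.
Definition prefprob (z : seq S) : R := prefprob_aux [::] z.

(* E_{pi_t^(beta)}[f], the powered target on X_{<= T+1} *)
Definition piw (T t : nat) (beta : R) (g : seq S -> R) : R :=
  \sum_(s < T.+1)
    \sum_(x : (s.+1).-tuple S)
      (if (s.+1 <= t.+1)%N then prefprob x * rx x `^ beta * g x else 0).
Definition pi_expect (T t : nat) (beta : R) (f : seq S -> R) : R :=
  piw T t beta f / piw T t beta (fun _ => 1).

(* correction factor F_t(z) with b0 = beta_{t-1}, b1 = beta_t *)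
Definition Fcorr (alpha : nat -> R) (t : nat) (b0 b1 : R) (z : seq S) : R :=
  let ratio := rx z / rx (pa z) in
  (ratio `^ b0 * rx z `^ (b1 - b0)) /
  (alpha t * (if (2 <= size z)%N then 1 else 0)
   + (1 - alpha t) * ratio `^ b0 * (if (size z <= t)%N then 1 else 0)).

Definition pool := seq (seq S * R).

Definition resample (P : pool) : fdist R (seq S) :=
  [seq (zw.2 / \sum_(yw <- P) yw.2, zw.1) | zw <- P].

Definition extend (u : seq S) : fdist R (seq S) :=
  [seq (p u x, rcons u x) | x <- enum S].

Definition estimate (P : pool) (f : seq S -> R) : R :=
  (\sum_(zw <- P) zw.2 * f zw.1) / (\sum_(zw <- P) zw.2).

(* State after round t: (P_t with weights W_t, beta_t).  The schedule  *)
(* [next t P_t beta_t] produces beta_{t+1}.                             *)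
Variable alpha : nat -> R.
Variable next : nat -> pool -> R -> R.
Variable beta0 : R.

Definition pb_init (N : nat) : fdist R (pool * R) :=
  fbind (fiid N (extend [::])) (fun P0 =>
    fret ([seq (z, rx z `^ beta0) | z <- P0], beta0)).

Definition pb_step (N t : nat) (st : pool * R) : fdist R (pool * R) :=
  let P := st.1 in
  let b := st.2 in
  let b' := next t.-1 P b in
  fbind (fiid N (fbind (resample P) extend)) (fun B =>
  fbind (fiid (N * t) (resample P)) (fun Sel =>
  fret ([seq (z, (1 - alpha t) * Fcorr alpha t b b' z / t%:R) | z <- Sel]
        ++ [seq (z, alpha t * Fcorr alpha t b b' z) | z <- B], b'))).

Fixpoint pbsmc (N t : nat) : fdist R (pool * R) :=
  if t is t'.+1 then fbind (pbsmc N t') (pb_step N t) else pb_init N.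

End PBSMC.

Definition adaptive_next (R : realType) (S : finType) (r : seq S -> R)
    (gamma : R) (t : nat) (P : pool R S) (b : R) : R :=
  let tot := \sum_(zw <- P) r zw.1 in
  let sigma := \sum_(zw <- P) (r zw.1 / tot) ^+ 2 in
  b + gamma * (1 - (sigma - 1 / (size P)%:R)).

Definition fixed_next (R : realType) (S : finType) (betas : nat -> R)
    (t : nat) (P : pool R S) (b : R) : R := betas t.+1.

(* The proof is an induction on the round t.  Conditionally on the pool of
   round t, the next pool consists of N i.i.d. extensions of resampled
   particles and N t i.i.d. resampled particles, so by Chebyshev its mean of
   W h concentrates, at rate 1/N, around its conditional mean.  Resampling
   expectations are self-normalized estimates at round t, hence converge by
   the induction hypothesis, and the correction factor is continuous in the
   powers; so the conditional mean converges.  Its limit is the unnormalized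
   target of round t + 1 because of the balance property of the correction
   factor (Fcorr_balance), and the self-normalized estimator follows by
   continuity of division.  A schedule for the powers only needs to track a
   deterministic sequence up to O(1/N): fixed powers do so trivially, and the
   adaptive rule does since sigma_t <= R_max / (R_min C_t), which gives the
   limits beta_t^* = beta_0 + t gamma. *)

From HB Require Import structures.
From mathcomp Require Import all_boot all_order all_algebra.
From mathcomp Require Import all_classical all_reals all_analysis.
From mathcomp Require Import ring lra zify.
Import Order.TTheory GRing.Theory Num.Theory.
Import numFieldNormedType.Exports.
Local Open Scope classical_set_scope.
Local Open Scope ring_scope.
Set Implicit Arguments. Unset Strict Implicit. Unset Printing Implicit Defensive.

Section FDist.
Variable R : realType.

Definition fexpect {A : Type} (d : fdist R A) (X : A -> R) : R :=
  \sum_(wa <- d) wa.1 * X wa.2.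

Fixpoint fdist_on {A : Type} (P : A -> Prop) (d : fdist R A) : Prop :=
  if d is wa :: d' then (0 <= wa.1 /\ P wa.2) /\ fdist_on P d' else True.

Definition fmass {A : Type} (d : fdist R A) := fexpect d (fun _ => 1).

Lemma fexpect_nil A (X : A -> R) : fexpect [::] X = 0.
Proof. by rewrite /fexpect big_nil. Qed.

Lemma fexpect_cons A (wa : R * A) d X : fexpect (wa :: d) X = wa.1 * X wa.2 + fexpect d X.
Proof. by rewrite /fexpect big_cons. Qed.

Lemma fexpect_cat A (d1 d2 : fdist R A) X : fexpect (d1 ++ d2) X = fexpect d1 X + fexpect d2 X.
Proof. by rewrite /fexpect big_cat. Qed.

Lemma fexpect_ret A (a : A) X : fexpect (fret a) X = X a.
Proof. by rewrite /fexpect /fret big_cons big_nil mul1r addr0. Qed.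

Lemma fexpect_map_scale A (c : R) (d : fdist R A) X :
  fexpect [seq (c * wb.1, wb.2) | wb <- d] X = c * fexpect d X.
Proof.
rewrite /fexpect big_map mulr_sumr; apply: eq_bigr => wb _ /=; by rewrite mulrA.
Qed.

Lemma fbind_cons A B (wa : R * A) d (k : A -> fdist R B) :
  fbind (wa :: d) k = [seq (wa.1 * wb.1, wb.2) | wb <- k wa.2] ++ fbind d k.
Proof. by []. Qed.

Lemma fexpect_bind A B (d : fdist R A) (k : A -> fdist R B) X :
  fexpect (fbind d k) X = fexpect d (fun a => fexpect (k a) X).
Proof.
elim: d => [|wa d IH]; first by rewrite /fbind /= !fexpect_nil.
by rewrite fbind_cons fexpect_cat fexpect_map_scale IH fexpect_cons.
Qed.

Lemma fexpectD A (d : fdist R A) X Y :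
  fexpect d (fun a => X a + Y a) = fexpect d X + fexpect d Y.
Proof. by rewrite /fexpect -big_split; apply: eq_bigr => wa _; rewrite mulrDr. Qed.

Lemma fexpectZ A (d : fdist R A) c X : fexpect d (fun a => c * X a) = c * fexpect d X.
Proof. by rewrite /fexpect mulr_sumr; apply: eq_bigr => wa _; rewrite mulrCA. Qed.

Lemma fexpect_cst A (d : fdist R A) c : fexpect d (fun _ => c) = c * fmass d.
Proof. by rewrite -fexpectZ; apply: eq_bigr => wa _ ; rewrite mulr1. Qed.

Lemma fexpectB A (d : fdist R A) X Y :
  fexpect d (fun a => X a - Y a) = fexpect d X - fexpect d Y.
Proof.
rewrite -[fexpect d Y]mul1r -mulNr -fexpectZ -fexpectD; apply: eq_bigr => wa _.
by rewrite mulN1r.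
Qed.

Lemma eq_fexpect A (d : fdist R A) X Y : (forall a, X a = Y a) -> fexpect d X = fexpect d Y.
Proof. by move=> H; apply: eq_bigr => wa _; rewrite H. Qed.

Lemma fdist_on_sub A (P Q : A -> Prop) d :
  fdist_on P d -> (forall a, P a -> Q a) -> fdist_on Q d.
Proof.
elim: d => [//|wa d IH] /= [[H0 HP] Hd] HPQ; split; first by split=> //; apply: HPQ.
exact: IH.
Qed.

Lemma fdist_on_cat A (P : A -> Prop) d1 d2 :
  fdist_on P d1 -> fdist_on P d2 -> fdist_on P (d1 ++ d2).
Proof. by elim: d1 => [//|wa d IH] /= [H1 H2] H3; split=> //; apply: IH. Qed.

Lemma fdist_on_ret A (P : A -> Prop) a : P a -> fdist_on P (fret a).
Proof. by move=> Ha /=; split=> //; split=> //; rewrite ler01. Qed.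

Lemma fdist_on_bind A B (P : A -> Prop) (Q : B -> Prop) d (k : A -> fdist R B) :
  fdist_on P d -> (forall a, P a -> fdist_on Q (k a)) -> fdist_on Q (fbind d k).
Proof.
elim: d => [//|wa d IH] /= [[H0 HP] Hd] Hk; rewrite fbind_cons.
apply: fdist_on_cat; last exact: IH.
move: (Hk _ HP); elim: (k wa.2) => [//|wb l IHl] /= [[H1 HQ] Hl].
by split; [split=> //; apply: mulr_ge0 | apply: IHl].
Qed.

Lemma ler_fexpect A (P : A -> Prop) d (X Y : A -> R) :
  fdist_on P d -> (forall a, P a -> X a <= Y a) -> fexpect d X <= fexpect d Y.
Proof.
elim: d => [|wa d IH] /=; first by rewrite !fexpect_nil.
move=> [[H0 HP] Hd] HXY; rewrite !fexpect_cons; apply: lerD; last exact: IH.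
by apply: ler_wpM2l => //; apply: HXY.
Qed.

Lemma fexpect_ge0 A (P : A -> Prop) d (X : A -> R) :
  fdist_on P d -> (forall a, P a -> 0 <= X a) -> 0 <= fexpect d X.
Proof.
move=> Hd HX; have -> : 0 = fexpect d (fun _ => 0) by rewrite fexpect_cst mul0r.
exact: (ler_fexpect Hd).
Qed.

Lemma fprobE A (d : fdist R A) (E : A -> bool) :
  fprob d E = fexpect d (fun a => (E a)%:R).
Proof.
rewrite /fprob /fexpect big_mkcond /=; apply: eq_bigr => wa _.
by case: (E wa.2); rewrite ?mulr1 ?mulr0.
Qed.

Lemma ler_fprob A (P : A -> Prop) d (E1 E2 : A -> bool) :
  fdist_on P d -> (forall a, P a -> E1 a -> E2 a) -> fprob d E1 <= fprob d E2.
Proof.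
move=> Hd H; rewrite !fprobE; apply: (ler_fexpect Hd) => a Pa.
by case E1a: (E1 a); rewrite ?(H a Pa E1a) ?ler01 //; case: (E2 a); rewrite ?ler01.
Qed.

Lemma fprob_ge0 A (P : A -> Prop) d (E : A -> bool) : fdist_on P d -> 0 <= fprob d E.
Proof.
move=> Hd; rewrite fprobE; apply: (fexpect_ge0 Hd) => a _; by case: (E a); rewrite ?ler01.
Qed.

Lemma fprobU A (P : A -> Prop) d (E E1 E2 : A -> bool) :
  fdist_on P d -> (forall a, P a -> E a -> E1 a || E2 a) ->
  fprob d E <= fprob d E1 + fprob d E2.
Proof.
move=> Hd H; rewrite !fprobE -fexpectD; apply: (ler_fexpect Hd) => a Pa.
case Ea: (E a); last by case: (E1 a); case: (E2 a) => /=; lra.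
by move: (H a Pa Ea); case: (E1 a); case: (E2 a) => //= _; lra.
Qed.

Lemma fprob_le_fmass A (P : A -> Prop) d (E : A -> bool) : fdist_on P d -> fprob d E <= fmass d.
Proof.
move=> Hd; rewrite fprobE; apply: (ler_fexpect Hd) => a _; by case: (E a); rewrite ?ler01.
Qed.

Lemma fprob_bind A B (d : fdist R A) (k : A -> fdist R B) E :
  fprob (fbind d k) E = fexpect d (fun a => fprob (k a) E).
Proof. by rewrite fprobE fexpect_bind; apply: eq_fexpect => a; rewrite fprobE. Qed.

Lemma fmass_bind A B (d : fdist R A) (k : A -> fdist R B) :
  fmass (fbind d k) = fexpect d (fun a => fmass (k a)).
Proof. by rewrite /fmass fexpect_bind. Qed.

Lemma eq_fexpect_on A (P : A -> Prop) (d : fdist R A) (X Y : A -> R) :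
  fdist_on P d -> (forall a, P a -> X a = Y a) -> fexpect d X = fexpect d Y.
Proof.
move=> Hd H; apply/eqP; rewrite eq_le.
by apply/andP; split; apply: (ler_fexpect Hd) => a Pa; rewrite H.
Qed.

Lemma ler_norm_fexpect A (P : A -> Prop) (d : fdist R A) (X : A -> R) :
  fdist_on P d -> `|fexpect d X| <= fexpect d (fun a => `|X a|).
Proof.
elim: d => [|wa d IH] /=; first by rewrite !fexpect_nil normr0.
move=> [[h0 _] Hd]; rewrite !fexpect_cons; apply: le_trans (ler_normD _ _) _.
by rewrite normrM (ger0_norm h0) lerD // IH.
Qed.

Lemma fprob_bind_le A B (P : A -> Prop) (d : fdist R A) (k : A -> fdist R B)
    (E : B -> bool) (bad : A -> bool) (c : R) :
  fdist_on P d -> fmass d = 1 -> 0 <= c ->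
  (forall a, P a -> fdist_on (fun _ => True) (k a) /\ fmass (k a) = 1) ->
  (forall a, P a -> ~~ bad a -> fprob (k a) E <= c) ->
  fprob (fbind d k) E <= fprob d bad + c.
Proof.
move=> Hd Hm c0 Hk Hgood.
have -> : c = fexpect d (fun _ => c) by rewrite fexpect_cst Hm mulr1.
rewrite fprob_bind fprobE -fexpectD; apply: (ler_fexpect Hd) => a Pa; have [Hka Hma] := Hk a Pa.
case: (boolP (bad a)) => Ba; last by rewrite add0r; apply: Hgood.
by apply: le_trans (fprob_le_fmass _ Hka) _; rewrite Hma lerDl.
Qed.

Lemma fprob_pair_le A B C (P1 : A -> Prop) (P2 : B -> Prop) (d1 : fdist R A)
    (d2 : fdist R B) (g : A -> B -> C) (E : C -> bool) (E1 : A -> bool) (E2 : B -> bool) :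
  fdist_on P1 d1 -> fdist_on P2 d2 -> fmass d1 = 1 -> fmass d2 = 1 ->
  (forall a b, P1 a -> P2 b -> E (g a b) -> E1 a || E2 b) ->
  fprob (fbind d1 (fun a => fbind d2 (fun b => fret (g a b)))) E
    <= fprob d1 E1 + fprob d2 E2.
Proof.
move=> Hd1 Hd2 Hm1 Hm2 HE.
have -> : fprob d2 E2 = fexpect d1 (fun _ => fprob d2 E2) by rewrite fexpect_cst Hm1 mulr1.
rewrite fprob_bind fprobE -fexpectD; apply: (ler_fexpect Hd1) => a Pa.
have -> : (E1 a)%:R = fexpect d2 (fun _ => (E1 a)%:R) :> R by rewrite fexpect_cst Hm2 mulr1.
rewrite fprob_bind fprobE -fexpectD; apply: (ler_fexpect Hd2) => b Pb.
rewrite fprobE fexpect_ret; move: (HE a b Pa Pb).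
case: (E _) => [/(_ isT)|_]; last by case: (E1 a); case: (E2 b) => /=; lra.
by case/orP => ->; [case: (E2 b) | case: (E1 a)] => /=; lra.
Qed.

Fixpoint all_prop {A : Type} (P : A -> Prop) (l : seq A) : Prop :=
  if l is x :: l' then P x /\ all_prop P l' else True.

Lemma fiidS A (d : fdist R A) n :
  fiid n.+1 d = fbind (fiid n d) (fun l => fbind d (fun x => fret (x :: l))).
Proof. by []. Qed.

Lemma fdist_on_fiid A (P : A -> Prop) (d : fdist R A) n :
  fdist_on P d -> fdist_on (fun l => size l = n /\ all_prop P l) (fiid n d).
Proof.
move=> Hd; elim: n => [|n IH]; first by apply: fdist_on_ret.
rewrite fiidS; apply: (fdist_on_bind IH) => l [Hs Hl].
apply: (fdist_on_bind Hd) => x Px; apply: fdist_on_ret => /=; by rewrite Hs.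
Qed.

Lemma all_prop_all A (P : A -> Prop) (Q : pred A) l :
  (forall a, P a -> Q a) -> all_prop P l -> all Q l.
Proof. by move=> H; elim: l => [//|a l IH] /= [Pa Pl]; rewrite H // IH. Qed.

Lemma fmass_fiid A (d : fdist R A) n : fmass d = 1 -> fmass (fiid n d) = 1.
Proof.
move=> Hm; elim: n => [|n IH]; first by rewrite /fmass fexpect_ret.
rewrite fiidS fmass_bind -IH; apply: eq_fexpect => l.
by rewrite fmass_bind -Hm; apply: eq_fexpect => x; rewrite /fmass fexpect_ret.
Qed.

Lemma fvar_fiid_sum A (d : fdist R A) (h : A -> R) n : fmass d = 1 ->
  fexpect (fiid n d) (fun l => (\sum_(x <- l) h x - n%:R * fexpect d h) ^+ 2) =
  n%:R * fexpect d (fun x => (h x - fexpect d h) ^+ 2).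
Proof.
move=> Hm; set mu := fexpect d h; set V := fexpect d _.
elim: n => [|n IH]; first by rewrite fexpect_ret big_nil mul0r subr0 expr0n /= mul0r.
have add_draw l : fexpect (fbind d (fun x => fret (x :: l)))
    (fun l' => (\sum_(x <- l') h x - n.+1%:R * mu) ^+ 2)
    = (\sum_(x <- l) h x - n%:R * mu) ^+ 2 + V.
  set s := \sum_(x <- l) h x - n%:R * mu; rewrite fexpect_bind.
  have -> : fexpect d (fun x => fexpect (fret (x :: l))
      (fun l' => (\sum_(y <- l') h y - n.+1%:R * mu) ^+ 2))
      = fexpect d (fun x => s ^+ 2 * 1 + 2 * s * (h x - mu) + (h x - mu) ^+ 2).
    apply: eq_fexpect => x; rewrite fexpect_ret big_cons -addn1 natrD /s.
    by set t := \sum_(_ <- l) h _; ring.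
  rewrite !fexpectD !fexpectZ fexpect_cst Hm fexpectB fexpect_cst Hm.
  by rewrite /V /mu !mulr1 subrr mulr0 addr0.
rewrite fiidS fexpect_bind (eq_fexpect _ add_draw) fexpectD fexpect_cst fmass_fiid //.
by rewrite IH mulr1 mulrSr mulrDl mul1r.
Qed.

Lemma fvar_le_moment2 A (P : A -> Prop) (d : fdist R A) (h : A -> R) :
  fdist_on P d -> fmass d = 1 ->
  fexpect d (fun x => (h x - fexpect d h) ^+ 2) <= fexpect d (fun x => h x ^+ 2).
Proof.
move=> Hd Hm.
have -> : fexpect d (fun x => (h x - fexpect d h) ^+ 2) =
   fexpect d (fun x => h x ^+ 2) - fexpect d h ^+ 2.
  have -> : fexpect d (fun x => (h x - fexpect d h) ^+ 2) =
    fexpect d (fun x => h x ^+ 2 + ((- (2 * fexpect d h)) * h x + fexpect d h ^+ 2)).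
    by apply: eq_fexpect => x; rewrite sqrrB; rewrite mulr2n mulrDl mulNr; ring.
  rewrite fexpectD fexpectD fexpectZ fexpect_cst Hm; ring.
by rewrite lerBlDr lerDl sqr_ge0.
Qed.

Lemma markov_sqr A (P : A -> Prop) (d : fdist R A) (X : A -> R) (del : R) :
  fdist_on P d -> 0 < del ->
  fprob d (fun a => del < `|X a|) <= fexpect d (fun a => X a ^+ 2) / del ^+ 2.
Proof.
move=> Hd del0; rewrite fprobE -[_ / _]mulrC -fexpectZ; apply: (ler_fexpect Hd) => a _.
case: ltrP => H /=; last by rewrite mulr_ge0 ?invr_ge0 ?sqr_ge0.
rewrite /= mulrC ler_pdivlMr ?exprn_gt0 // mul1r.
by rewrite -(ger0_norm (sqr_ge0 (X a))) normrX lerXn2r ?nnegrE ?normr_ge0 // ltW.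
Qed.

Lemma chebyshev_fiid_sum A (P : A -> Prop) (d : fdist R A) (h : A -> R) n (del : R) :
  fdist_on P d -> fmass d = 1 -> 0 < del ->
  fprob (fiid n d) (fun l => del < `|\sum_(x <- l) h x - n%:R * fexpect d h|)
    <= n%:R * fexpect d (fun x => h x ^+ 2) / del ^+ 2.
Proof.
move=> Hd Hm del0.
apply: le_trans; first exact: (markov_sqr _ (fdist_on_fiid n Hd)).
rewrite fvar_fiid_sum // ler_pM2r ?invr_gt0 ?exprn_gt0 //.
by rewrite ler_wpM2l // (fvar_le_moment2 _ Hd).
Qed.

Lemma chebyshev_fiid_mean A (P : A -> Prop) (d : fdist R A) (h : A -> R) n (eps : R) :
  fdist_on P d -> fmass d = 1 -> 0 < eps -> (0 < n)%N ->
  fprob (fiid n d) (fun l => eps < `|(\sum_(x <- l) h x) / n%:R - fexpect d h|)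
    <= fexpect d (fun x => h x ^+ 2) / (n%:R * eps ^+ 2).
Proof.
move=> Hd Hm eps0 n0; have n0' : 0 < n%:R :> R by rewrite ltr0n.
have -> : fexpect d (fun x => h x ^+ 2) / (n%:R * eps ^+ 2)
    = n%:R * fexpect d (fun x => h x ^+ 2) / (n%:R * eps) ^+ 2.
  by rewrite exprMn; field; rewrite !gt_eqF.
apply: le_trans (chebyshev_fiid_sum h n Hd Hm (mulr_gt0 n0' eps0)).
apply: (ler_fprob (fdist_on_fiid n Hd)) => l _.
have -> : (\sum_(x <- l) h x) / n%:R - fexpect d h
    = (\sum_(x <- l) h x - n%:R * fexpect d h) / n%:R by field; rewrite gt_eqF.
by rewrite normrM normfV (gtr0_norm n0') ltr_pdivlMr // mulrC.
Qed.

End FDist.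

Section ConvergenceInProbability.
Variable R : realType.

Definition cvgp {A : Type} (d : nat -> fdist R A) (X : A -> R) (c : R) :=
  forall eps, 0 < eps -> forall e, 0 < e -> exists M, forall N, (M <= N)%N ->
    fprob (d N) (fun a => eps < `|X a - c|) <= e.

Lemma continuous2_delta (phi : R -> R -> R) (c1 c2 : R) :
  {for (c1, c2), continuous (fun z : R * R => phi z.1 z.2)} ->
  forall e, 0 < e -> exists2 del, 0 < del & forall x y,
    `|x - c1| <= del -> `|y - c2| <= del -> `|phi x y - phi c1 c2| <= e.
Proof.
move=> /cvgrPdist_le /= H e e0.
have [d /= d0 Hd] := (nbhs_ballP _ _).1 (H e e0).
exists (d / 2); first by rewrite divr_gt0.
move=> x y Hx Hy; rewrite -normrN opprB; apply: (Hd (x, y)).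
have ball_half u c : `|u - c| <= d / 2 -> ball c d u.
  move=> Hu; rewrite -ball_normE /ball_ /= -normrN opprB.
  by apply: le_lt_trans Hu _; rewrite ltr_pdivrMr // ltr_pMr // ltr1n.
by split; apply: ball_half.
Qed.

Lemma div_small_eventually (K e : R) : 0 < e ->
  exists M, forall N, (M <= N)%N -> (1 <= N)%N -> K / N%:R <= e.
Proof.
move=> e0; exists (Num.truncn (K / e)).+1 => N HN HN1.
have N0 : 0 < N%:R :> R by rewrite ltr0n.
rewrite ler_pdivrMr // -ler_pdivrMl // ltW //.
by apply: lt_le_trans (truncnS_gt _) _; rewrite ler_nat mulrC.
Qed.

Section Laws.
Variables (A : Type) (d : nat -> fdist R A) (G : nat -> A -> Prop).
Hypothesis d_on : forall N, (1 <= N)%N -> fdist_on (G N) (d N).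

Lemma cvgp_conv_prob (X : A -> R) c : cvgp d X c -> conv_prob d X c.
Proof.
move=> H eps eps0; apply/cvgrPdist_lt => e e0.
have [M HM] := H eps eps0 _ (divr_gt0 e0 (ltr0n R 2)).
exists (maxn M 1) => // N /=; rewrite geq_max => /andP[h1 h2].
rewrite sub0r normrN ger0_norm; last exact: (fprob_ge0 _ (d_on h2)).
apply: le_lt_trans (HM N h1) _.
by rewrite ltr_pdivrMr // ltr_pMr // ltr1n.
Qed.

Lemma cvgp_ext (X Y : A -> R) c :
  (forall N a, (1 <= N)%N -> G N a -> X a = Y a) -> cvgp d X c -> cvgp d Y c.
Proof.
move=> HXY HX eps eps0 e e0; have [M HM] := HX eps eps0 e e0.
exists (maxn M 1) => N; rewrite geq_max => /andP[HNM HN1].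
apply: le_trans (HM N HNM).
by apply: (ler_fprob (d_on HN1)) => a Ga; rewrite (HXY N a HN1 Ga).
Qed.

Lemma cvgp_near (X : A -> R) c :
  (forall eps, 0 < eps -> exists M, forall N a, (M <= N)%N -> (1 <= N)%N -> G N a ->
     `|X a - c| <= eps) -> cvgp d X c.
Proof.
move=> H eps eps0 e e0; have [M HM] := H eps eps0.
exists (maxn M 1) => N; rewrite geq_max => /andP[HNM HN1].
apply: le_trans (_ : fprob (d N) (fun _ => false) <= e).
  by apply: (ler_fprob (d_on HN1)) => a Ga /=; rewrite ltNge (HM N a).
by rewrite /fprob big_pred0 // ltW.
Qed.

Lemma cvgp_cst c : cvgp d (fun _ => c) c.
Proof.
by apply: cvgp_near => eps eps0; exists 0%N => N a _ _ _; rewrite subrr normr0 ltW.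
Qed.

Lemma cvgp_chebyshev (X : A -> R) c :
  (forall eps, 0 < eps -> exists C, forall N, (1 <= N)%N ->
     fprob (d N) (fun a => eps < `|X a - c|) <= C / N%:R) ->
  cvgp d X c.
Proof.
move=> H eps eps0 e e0; have [C HC] := H eps eps0.
have [M HM] := div_small_eventually C e0.
exists (maxn M 1) => N; rewrite geq_max => /andP[h1 h2].
by apply: le_trans (HC N h2) _; apply: HM.
Qed.

Lemma cvgp_op2 (phi : R -> R -> R) (X Y : A -> R) c1 c2 :
  {for (c1, c2), continuous (fun z : R * R => phi z.1 z.2)} ->
  cvgp d X c1 -> cvgp d Y c2 -> cvgp d (fun a => phi (X a) (Y a)) (phi c1 c2).
Proof.
move=> Hphi HX HY eps eps0 e e0.
have [del del0 Hdel] := continuous2_delta Hphi eps0.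
have e20 : 0 < e / 2 by rewrite divr_gt0.
have [M1 HM1] := HX del del0 _ e20; have [M2 HM2] := HY del del0 _ e20.
exists (maxn (maxn M1 M2) 1) => N; rewrite !geq_max => /andP[/andP[H1 H2] HN1].
apply: le_trans (fprobU (E1 := fun a => del < `|X a - c1|)
  (E2 := fun a => del < `|Y a - c2|) (d_on HN1) _) _.
  move=> a _ /=; apply: contraLR; rewrite negb_or -!leNgt => /andP[h1 h2].
  exact: Hdel.
by rewrite [e]splitr lerD // ?HM1 ?HM2.
Qed.

Lemma cvgp_cont (f : R -> R) (X : A -> R) c :
  {for c, continuous f} -> cvgp d X c -> cvgp d (fun a => f (X a)) (f c).
Proof.
move=> Hf HX; apply: (cvgp_op2 (phi := fun x _ => f x) _ HX HX).
by apply: continuous_comp => //; exact: cvg_fst.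
Qed.

Lemma cvgp_add (X Y : A -> R) c1 c2 : cvgp d X c1 -> cvgp d Y c2 ->
  cvgp d (fun a => X a + Y a) (c1 + c2).
Proof.
apply: (cvgp_op2 (phi := fun x y => x + y)).
by apply: continuousD; [exact: cvg_fst | exact: cvg_snd].
Qed.

Lemma cvgp_mul (X Y : A -> R) c1 c2 : cvgp d X c1 -> cvgp d Y c2 ->
  cvgp d (fun a => X a * Y a) (c1 * c2).
Proof.
apply: (cvgp_op2 (phi := fun x y => x * y)).
by apply: continuousM; [exact: cvg_fst | exact: cvg_snd].
Qed.

Lemma cvgp_scale (X : A -> R) k c : cvgp d X c -> cvgp d (fun a => k * X a) (k * c).
Proof. exact/cvgp_mul/cvgp_cst. Qed.

Lemma cvgp_sub (X Y : A -> R) c1 c2 : cvgp d X c1 -> cvgp d Y c2 ->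
  cvgp d (fun a => X a - Y a) (c1 - c2).
Proof.
move=> HX HY; have := cvgp_add HX (cvgp_scale (-1) HY).
by rewrite mulN1r; apply: cvgp_ext => N a _ _; rewrite mulN1r.
Qed.

Lemma cvgp_sqr (X : A -> R) c : cvgp d X c -> cvgp d (fun a => X a ^+ 2) (c ^+ 2).
Proof. by move=> HX; have := cvgp_mul HX HX; rewrite -expr2; apply: cvgp_ext. Qed.

Lemma cvgp_div (X Y : A -> R) c1 c2 : c2 != 0 -> cvgp d X c1 -> cvgp d Y c2 ->
  cvgp d (fun a => X a / Y a) (c1 / c2).
Proof.
move=> c0 HX HY; apply: (cvgp_mul HX).
exact: (cvgp_cont (f := GRing.inv) (inv_continuous c0) HY).
Qed.

Lemma cvgp_powR (X : A -> R) c (x : R) : 0 < x -> cvgp d X c ->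
  cvgp d (fun a => x `^ X a) (x `^ c).
Proof.
move=> x0 HX.
have := cvgp_cont (@continuous_expR R (c * ln x)) (cvgp_mul HX (cvgp_cst (ln x))).
by rewrite {2}/powR gt_eqF //; apply: cvgp_ext => N a _ _; rewrite /powR gt_eqF.
Qed.

Lemma cvgp_absdist (X : A -> R) c : cvgp d X c -> cvgp d (fun a => `|X a - c|) 0.
Proof.
move=> HX; have := cvgp_cont (@norm_continuous _ R^o _) (cvgp_sub HX (cvgp_cst c)).
by rewrite subrr normr0.
Qed.

Lemma cvgp_sum (I : Type) (s : seq I) (X : I -> A -> R) (c : I -> R) :
  (forall i, cvgp d (X i) (c i)) ->
  cvgp d (fun a => \sum_(i <- s) X i a) (\sum_(i <- s) c i).
Proof.
move=> H; elim: s => [|i s IH].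
  by rewrite big_nil; apply: cvgp_ext (cvgp_cst 0) => N a _ _; rewrite big_nil.
by rewrite big_cons; apply: cvgp_ext (cvgp_add (H i) IH) => N a _ _; rewrite big_cons.
Qed.

Lemma cvgp_sum0 (I : Type) (s : seq I) (X : I -> A -> R) :
  (forall i, cvgp d (X i) 0) -> cvgp d (fun a => \sum_(i <- s) X i a) 0.
Proof. by move=> H; have := cvgp_sum s H; rewrite big1_eq. Qed.

Lemma cvgp_approx (X Y Z : A -> R) c : cvgp d X c -> cvgp d Z 0 ->
  (forall N a, (1 <= N)%N -> G N a -> `|Y a - X a| <= Z a) -> cvgp d Y c.
Proof.
move=> HX HZ HYZ eps eps0 e e0.
have e20 : 0 < e / 2 by rewrite divr_gt0.
have eps20 : 0 < eps / 2 by rewrite divr_gt0.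
have [M1 HM1] := HX _ eps20 _ e20; have [M2 HM2] := HZ _ eps20 _ e20.
exists (maxn (maxn M1 M2) 1) => N; rewrite !geq_max => /andP[/andP[H1 H2] HN1].
apply: le_trans (fprobU (E1 := fun a => eps / 2 < `|X a - c|)
  (E2 := fun a => eps / 2 < `|Z a - 0|) (d_on HN1) _) _.
  move=> a Ga /=; apply: contraLR; rewrite negb_or -!leNgt subr0 => /andP[h1 h2].
  have -> : Y a - c = (Y a - X a) + (X a - c) by rewrite addrA subrK.
  apply: le_trans (ler_normD _ _) _; rewrite [eps]splitr lerD //.
  by apply: le_trans (HYZ N a HN1 Ga) _; apply: le_trans (ler_norm _) h2.
by rewrite [e]splitr lerD // ?HM1 ?HM2.
Qed.

End Laws.

Lemma cvgp_bind (A B : Type) (d : nat -> fdist R A) (G : nat -> A -> Prop)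
    (k : nat -> A -> fdist R B) (Y : B -> R) (mu : A -> R) (c : R) :
  (forall N, (1 <= N)%N -> fdist_on (G N) (d N)) ->
  (forall N, (1 <= N)%N -> fmass (d N) = 1) ->
  (forall N a, (1 <= N)%N -> G N a ->
     fdist_on (fun _ => True) (k N a) /\ fmass (k N a) = 1) ->
  cvgp d mu c ->
  (forall eps, 0 < eps -> exists2 C : A -> R, exists Cs, cvgp d C Cs &
     forall N a, (1 <= N)%N -> G N a ->
       fprob (k N a) (fun y => eps < `|Y y - mu a|) <= C a / N%:R) ->
  cvgp (fun N => fbind (d N) (k N)) Y c.
Proof.
move=> d_on d_mass k_ok Hmu HC eps eps0 e e0.
have eps20 : 0 < eps / 2 by rewrite divr_gt0.
have e30 : 0 < e / 3 by rewrite divr_gt0.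
have [C [Cs HCs] HCb] := HC _ eps20.
have [M1 HM1] := Hmu _ eps20 _ e30.
have [M2 HM2] := HCs _ ltr01 _ e30.
have [M3 HM3] := div_small_eventually (`|Cs| + 1) e30.
exists (maxn (maxn M1 M2) (maxn M3 1)) => N.
rewrite !geq_max => /andP[/andP[H1 H2] /andP[H3 HN1]].
pose bad a := (eps / 2 < `|mu a - c|) || (1 < `|C a - Cs|).
apply: le_trans (fprob_bind_le (bad := bad) (c := (`|Cs| + 1) / N%:R)
  (d_on N HN1) (d_mass N HN1) _ (k_ok N ^~ HN1) _) _.
- by rewrite divr_ge0 ?ler0n // addr_ge0.
- move=> a Ga; rewrite negb_or -!leNgt => /andP[hmu hC].
  have [k_on _] := k_ok N a HN1 Ga.
  have Hsub : fprob (k N a) (fun y => eps < `|Y y - c|)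
      <= fprob (k N a) (fun y => eps / 2 < `|Y y - mu a|).
    apply: (ler_fprob k_on) => y _; apply: contraLR; rewrite -!leNgt => hY.
    have -> : Y y - c = (Y y - mu a) + (mu a - c) by rewrite addrA subrK.
    by apply: le_trans (ler_normD _ _) _; rewrite [eps]splitr lerD.
  apply: le_trans Hsub _; apply: le_trans (HCb N a HN1 Ga) _.
  rewrite ler_pM2r ?invr_gt0 ?ltr0n //.
  have -> : C a = (C a - Cs) + Cs by rewrite subrK.
  by rewrite addrC; apply: lerD; [exact: ler_norm | exact: le_trans (ler_norm _) hC].
have Hbad : fprob (d N) bad <= fprob (d N) (fun a => eps / 2 < `|mu a - c|)
    + fprob (d N) (fun a => 1 < `|C a - Cs|) by apply: (fprobU (d_on N HN1)).
apply: le_trans (lerD Hbad (HM3 N H3 HN1)) _.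
have He : e / 3 + e / 3 + e / 3 <= e by lra.
apply: (le_trans _ He); rewrite lerD2r.
by apply: lerD; [exact: HM1 | exact: HM2].
Qed.

End ConvergenceInProbability.

Section Prefixes.
Variables (R : realType) (S : finType) (p : seq S -> S -> R) (r : seq S -> R).

Local Notation rx := (rx r).
Local Notation prefprob := (prefprob p).

Lemma size_pa (z : seq S) : size (pa z) = (size z).-1.
Proof. by rewrite /pa size_take; case: z => //= x z; rewrite ltnSn. Qed.

Lemma pa_rcons (x : seq S) y : pa (rcons x y) = x.
Proof. by rewrite /pa size_rcons /= -cats1 take_size_cat. Qed.

Lemma rx_rcons (x : seq S) y : rx (rcons x y) = r (rcons x y).
Proof. by case: x. Qed.

Lemma rx_tuple n (x : n.+1.-tuple S) : rx x = r x.
Proof. by case: x => -[|a l]. Qed.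

Lemma prefprob_aux_rcons u l y :
  prefprob_aux p u (rcons l y) = prefprob_aux p u l * p (u ++ l) y.
Proof.
elim: l u => [|x l IH] u /=; first by rewrite mulr1 mul1r cats0.
by rewrite IH mulrA cat_rcons.
Qed.

Lemma prefprob_rcons l y : prefprob (rcons l y) = prefprob l * p l y.
Proof. by rewrite /prefprob prefprob_aux_rcons. Qed.

Lemma prefprob1 y : prefprob [:: y] = p [::] y.
Proof. by rewrite /prefprob /= mulr1. Qed.

Definition sum_tuples n (F : seq S -> R) := \sum_(x : n.-tuple S) F x.

Lemma sum_tuples0 (F : seq S -> R) : sum_tuples 0 F = F [::].
Proof.
by rewrite /sum_tuples (big_pred1 [tuple]) // => x; apply/esym/eqP; exact: tuple0.
Qed.

Lemma sum_tuples_cons n (F : seq S -> R) :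
  sum_tuples n.+1 F = \sum_(y : S) sum_tuples n (fun x => F (y :: x)).
Proof.
rewrite /sum_tuples pair_big /=.
rewrite (reindex (fun q : S * n.-tuple S => [tuple of q.1 :: q.2])) /=.
  by apply: eq_bigr => -[y x] _.
exists (fun z : n.+1.-tuple S => (thead z, [tuple of behead z])).
  by move=> [y x] _ /=; rewrite theadE; congr pair; apply: val_inj.
by move=> z _; rewrite [RHS]tuple_eta.
Qed.

Lemma sum_tuples_rcons n (F : seq S -> R) :
  sum_tuples n.+1 F = sum_tuples n (fun x => \sum_(y : S) F (rcons x y)).
Proof.
elim: n F => [|n IH] F.
  by rewrite sum_tuples_cons sum_tuples0; apply: eq_bigr => y _; rewrite sum_tuples0.
by rewrite sum_tuples_cons [RHS]sum_tuples_cons; apply: eq_bigr => a _; rewrite IH.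
Qed.

Lemma eq_sum_tuples n (F G : seq S -> R) :
  (forall x : n.-tuple S, F x = G x) -> sum_tuples n F = sum_tuples n G.
Proof. by move=> H; apply: eq_bigr => x _; apply: H. Qed.

Lemma sum_tuplesD n (F G : seq S -> R) :
  sum_tuples n (fun x => F x + G x) = sum_tuples n F + sum_tuples n G.
Proof. by rewrite /sum_tuples big_split. Qed.

Lemma sum_tuples_ge0 n (F : seq S -> R) :
  (forall x : n.-tuple S, 0 <= F x) -> 0 <= sum_tuples n F.
Proof. by move=> H; apply: sumr_ge0 => x _. Qed.

Lemma sum_tuples_eq0 n (F : seq S -> R) :
  (forall x : n.-tuple S, F x = 0) -> sum_tuples n F = 0.
Proof. by move=> H; rewrite /sum_tuples big1 // => x _; apply: H. Qed.

Variable T : nat.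

Lemma piwE t b (f : seq S -> R) : piw p r T t b f =
  \sum_(s < T.+1) sum_tuples s.+1
    (fun x => if (s.+1 <= t.+1)%N then prefprob x * rx x `^ b * f x else 0).
Proof. by []. Qed.

Lemma piwZ t b c (f : seq S -> R) :
  piw p r T t b (fun z => c * f z) = c * piw p r T t b f.
Proof.
rewrite !piwE mulr_sumr; apply: eq_bigr => s _; rewrite /sum_tuples mulr_sumr.
by apply: eq_bigr => x _; case: ifP; rewrite ?mulr0 // mulrCA mulrA.
Qed.

Lemma eq_piw t b (f g : seq S -> R) :
  (forall z, f z = g z) -> piw p r T t b f = piw p r T t b g.
Proof.
by move=> H; rewrite !piwE; apply: eq_bigr => s _; apply: eq_sum_tuples => x; rewrite H.
Qed.

Lemma piw_len1_term t b (f : seq S -> R) :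
  sum_tuples 1 (fun x => if (1 <= t.+1)%N then prefprob x * rx x `^ b * f x else 0)
  = \sum_(y : S) p [::] y * (rx [:: y] `^ b * f [:: y]).
Proof.
by rewrite sum_tuples_cons; apply: eq_bigr => y _; rewrite sum_tuples0 /= prefprob1 mulrA.
Qed.

Lemma sum_ord_shift (A B C : nat -> R) : B T = 0 -> A 0%N = C 0%N ->
  (forall s, (s < T)%N -> A s.+1 + B s = C s.+1) ->
  \sum_(s < T.+1) A s + \sum_(s < T.+1) B s = \sum_(s < T.+1) C s.
Proof.
move=> HB H0 HS.
rewrite -!(big_mkord xpredT) big_nat_recl // big_nat_recr //= HB addr0.
rewrite big_nat_recl //= H0 -addrA -big_split /=; congr (_ + _).
by apply: eq_big_nat => s /andP[_ Hs]; apply: HS.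
Qed.

End Prefixes.

Section Pools.
Variables (R : realType) (S : finType).

Definition len_in m (z : seq S) := (1 <= size z <= m)%N.

Lemma len_inS m z : len_in m z -> len_in m.+1 z.
Proof. by case/andP => z1 zm; rewrite /len_in z1 leqW. Qed.

Definition valid_pool m (P : pool R S) := all (fun zw => len_in m zw.1 && (0 < zw.2)) P.

Definition pool_mass (P : pool R S) := \sum_(zw <- P) zw.2.

Definition pool_mean (h : seq S -> R) (P : pool R S) :=
  (\sum_(zw <- P) zw.2 * h zw.1) / (size P)%:R.

Lemma valid_pool_cat m (P1 P2 : pool R S) :
  valid_pool m (P1 ++ P2) = valid_pool m P1 && valid_pool m P2.
Proof. by rewrite /valid_pool all_cat. Qed.

Lemma pool_neq_nil m N (P : pool R S) : (1 <= N)%N -> size P = (N * m.+1)%N -> P != [::].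
Proof.
move=> N1 Hs; apply/eqP => HP; move: Hs; rewrite HP /= => /esym/eqP.
by rewrite muln_eq0; case: N N1.
Qed.

Lemma pool_mass_ge0 m (P : pool R S) : valid_pool m P -> 0 <= pool_mass P.
Proof.
move=> HP; rewrite /pool_mass big_seq; apply: sumr_ge0 => zw Hzw.
by move/allP: HP => /(_ zw Hzw) /andP[_ /ltW].
Qed.

Lemma pool_mass_gt0 m (P : pool R S) : valid_pool m P -> P != [::] -> 0 < pool_mass P.
Proof.
case: P => [//|zw P] /= /andP[/andP[_ h0] HP] _.
by rewrite /pool_mass big_cons ltr_pwDl // (pool_mass_ge0 HP).
Qed.

Lemma estimate_pool_mean (P : pool R S) g :
  estimate P g = pool_mean g P / pool_mean (fun _ => 1) P.
Proof.
rewrite /estimate /pool_mean; under [X in _ / X = _]eq_bigr do rewrite -[_.2]mulr1.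
have [->|HP] := eqVneq P [::]; first by rewrite !big_nil !mul0r.
by rewrite invf_div mulrA divfK // pnatr_eq0 size_eq0.
Qed.

Lemma fexpect_resample (P : pool R S) (h : seq S -> R) :
  fexpect (resample P) h = estimate P h.
Proof.
rewrite /fexpect /resample /estimate big_map mulr_suml; apply: eq_bigr => zw _ /=.
by rewrite mulrAC.
Qed.

Lemma fmass_resample m (P : pool R S) : valid_pool m P -> P != [::] ->
  fmass (resample P) = 1.
Proof.
move=> HP HP0; rewrite /fmass fexpect_resample /estimate.
under eq_bigr do rewrite mulr1.
by rewrite divff // gt_eqF // (pool_mass_gt0 HP).
Qed.

Lemma fdist_on_resample m (P : pool R S) : valid_pool m P ->
  fdist_on (len_in m) (resample P).
Proof.
move=> HP; rewrite /resample; have := pool_mass_ge0 HP; rewrite /pool_mass.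
move: (\sum_(yw <- P) yw.2) => w0 Hw0.
elim: P HP => [//|zw P IH] /= /andP[/andP[h1 h2] HP].
by split; [split=> //; rewrite divr_ge0 // ltW | exact: IH].
Qed.

Definition abs_total m (h : seq S -> R) :=
  \sum_(s < m) \sum_(x : s.+1.-tuple S) `|h x|.

Lemma norm_le_abs_total m (h : seq S -> R) (z : seq S) :
  len_in m z -> `|h z| <= abs_total m h.
Proof.
case/andP => z1 zm.
have Hs : ((size z).-1 < m)%N by case: (size z) z1 zm.
have Hz : size z == ((size z).-1).+1 by case: (size z) z1.
rewrite /abs_total (bigD1 (Ordinal Hs)) //= (bigD1 (Tuple Hz)) //= -addrA lerDl.
by rewrite addr_ge0 ?sumr_ge0 // => s _; rewrite sumr_ge0.
Qed.

Lemma norm_estimate_le_abs_total m (P : pool R S) (h : seq S -> R) :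
  valid_pool m P -> P != [::] -> `|estimate P h| <= abs_total m h.
Proof.
move=> HP HP0; rewrite -fexpect_resample.
apply: le_trans (ler_norm_fexpect _ (fdist_on_resample HP)) _.
apply: le_trans (ler_fexpect (fdist_on_resample HP) (Y := fun _ => abs_total m h) _) _.
  by move=> z Hz; apply: norm_le_abs_total.
by rewrite fexpect_cst (fmass_resample HP HP0) mulr1.
Qed.

Lemma cvgp_estimate A (d : nat -> fdist R A) (G : nat -> A -> Prop) (X : A -> pool R S)
    g Lg L1 :
  (forall N, (1 <= N)%N -> fdist_on (G N) (d N)) -> L1 != 0 ->
  cvgp d (fun a => pool_mean g (X a)) Lg -> cvgp d (fun a => pool_mean (fun _ => 1) (X a)) L1 ->
  cvgp d (fun a => estimate (X a) g) (Lg / L1).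
Proof.
move=> d_on L10 Hg H1; have := cvgp_div d_on L10 Hg H1.
by apply: (cvgp_ext d_on) => N a _ _; rewrite estimate_pool_mean.
Qed.

End Pools.

Section Model.
Variables (R : realType) (S : finType) (T : nat)
  (p : seq S -> S -> R) (r : seq S -> R) (Rmin Rmax : R) (alpha : nat -> R).
Hypothesis p_ge0 : forall (u : seq S) (x : S), 0 <= p u x.
Hypothesis p_norm : forall u : seq S, \sum_(x : S) p u x = 1.
Hypothesis Rmin_gt0 : 0 < Rmin.
Hypothesis r_bnd : forall z : seq S, (1 <= size z <= T.+1)%N -> Rmin <= r z <= Rmax.
Hypothesis alpha_bnd : forall t : nat, 0 < alpha t < 1.

Local Notation rx := (rx r).
Local Notation prefprob := (prefprob p).
Local Notation Fc := (Fcorr r alpha).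

Lemma r_gt0 z : (1 <= size z <= T.+1)%N -> 0 < r z.
Proof. by move=> H; have /andP[h _] := r_bnd H; apply: lt_le_trans h. Qed.

Lemma rx_gt0 z : (size z <= T.+1)%N -> 0 < rx z.
Proof. by case: z => [|x z] H /=; [exact: ltr01 | apply: r_gt0; rewrite /= H]. Qed.

Lemma rx_pa_gt0 z : (size z <= T.+2)%N -> 0 < rx (pa z).
Proof. by move=> H; apply: rx_gt0; rewrite size_pa; case: (size z) H. Qed.

Lemma alpha_gt0 t : 0 < alpha t.
Proof. by case/andP: (alpha_bnd t). Qed.

Lemma onem_alpha_gt0 t : 0 < 1 - alpha t.
Proof. by case/andP: (alpha_bnd t) => _; rewrite subr_gt0. Qed.

Lemma prefprob_ge0 z : 0 <= prefprob z.
Proof.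
rewrite /prefprob; elim: z [::] => [|x z IH] u /=; first exact: ler01.
exact: mulr_ge0.
Qed.

Definition Fcorr_den t b z :=
  alpha t * (if (2 <= size z)%N then 1 else 0)
  + (1 - alpha t) * (rx z / rx (pa z)) `^ b * (if (size z <= t)%N then 1 else 0).

Lemma FcorrE t b0 b1 z : Fc t b0 b1 z =
  ((rx z / rx (pa z)) `^ b0 * rx z `^ (b1 - b0)) / Fcorr_den t b0 z.
Proof. by []. Qed.

Lemma Fcorr_den_gt0 t b z : (1 <= t)%N -> (1 <= size z)%N -> 0 < Fcorr_den t b z.
Proof.
move=> t1 z1; have al0 := alpha_gt0 t; have al1 := onem_alpha_gt0 t.
rewrite /Fcorr_den; case: ifP => z2.
  rewrite mulr1; apply: ltr_pwDl => //.
  apply: mulr_ge0 (mulr_ge0 (ltW al1) (powR_ge0 _ _)) _.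
  by case: ifP; rewrite ?ler01.
have -> : (size z <= t)%N by move: z2 z1; case: (size z) => [|[|n]].
rewrite mulr0 add0r mulr1 mulr_gt0 // powR_gt0 //.
by case: z z1 z2 => [//|x [|y z]] //= _ _; rewrite /pa /= divr1 r_gt0.
Qed.

Lemma Fcorr_gt0 t b0 b1 z : (1 <= t)%N -> (1 <= size z <= T.+1)%N -> 0 < Fc t b0 b1 z.
Proof.
move=> t1 /andP[z1 z2]; rewrite FcorrE divr_gt0 ?Fcorr_den_gt0 //.
apply: mulr_gt0; apply: powR_gt0; last exact: rx_gt0.
by apply: divr_gt0; [exact: rx_gt0 | exact: rx_pa_gt0 (leqW z2)].
Qed.

(* The correction factor is designed for this: a prefix z reached either by
   extending its parent (probability alpha) or by reselecting z itself
   (probability 1 - alpha) carries, on average, the target weight r(z)^beta_t. *)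
Lemma Fcorr_balance t b0 b1 z : (1 <= t)%N -> (1 <= size z <= T.+1)%N ->
  (alpha t * (if (2 <= size z)%N then rx (pa z) `^ b0 else 0)
   + (1 - alpha t) * (if (size z <= t)%N then rx z `^ b0 else 0)) * Fc t b0 b1 z
  = rx z `^ b1.
Proof.
move=> t1 /andP[z1 zT].
have rz := rx_gt0 zT; have rpa := rx_pa_gt0 (leqW zT).
have := Fcorr_den_gt0 b0 t1 z1; rewrite FcorrE /Fcorr_den.
set u := (rx z / rx (pa z)) `^ b0; set v := rx (pa z) `^ b0.
have -> : rx z `^ b1 = rx z `^ b0 * rx z `^ (b1 - b0).
  by rewrite -powRD ?subrKC //; apply/implyP => _; rewrite gt_eqF.
have -> : rx z `^ b0 = u * v by rewrite /u /v -powRM ?divfK ?gt_eqF ?divr_ge0 ?ltW.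
have u0 : u != 0 by rewrite gt_eqF // powR_gt0 // divr_gt0.
have a0 := lt0r_neq0 (alpha_gt0 t); have a1 := lt0r_neq0 (onem_alpha_gt0 t).
set w := rx z `^ (b1 - b0).
case: ifP; case: ifP => _ _ den0; rewrite ?mulr0 ?mulr1 ?addr0 ?add0r in den0 *.
all: first [by rewrite ltxx in den0 | by field; rewrite ?a0 ?a1 ?u0 ?lt0r_neq0].
Qed.

Lemma fexpect_extend (u : seq S) (h : seq S -> R) :
  fexpect (extend p u) h = \sum_(x : S) p u x * h (rcons u x).
Proof. by rewrite /fexpect /extend big_map big_enum /=; apply: eq_bigl => x; rewrite inE. Qed.

Lemma fmass_extend (u : seq S) : fmass (extend p u) = 1.
Proof. by rewrite /fmass fexpect_extend -[RHS](p_norm u); under eq_bigr do rewrite mulr1. Qed.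

Lemma fdist_on_extend (u : seq S) : fdist_on (fun z => size z = (size u).+1) (extend p u).
Proof.
rewrite /extend; elim: (enum S) => [//|x l IH] /=.
by split; [split; [exact: p_ge0 | rewrite size_rcons] | exact: IH].
Qed.

Lemma fdist_on_resample_extend m (P : pool R S) : valid_pool m P ->
  fdist_on (len_in m.+1) (fbind (resample P) (extend p)).
Proof.
move=> HP; apply: (fdist_on_bind (fdist_on_resample HP)) => u /andP[u1 um].
by apply: fdist_on_sub (fdist_on_extend u) _ => z Hz; rewrite /len_in Hz /= ltnS um.
Qed.

Lemma fmass_resample_extend m (P : pool R S) : valid_pool m P -> P != [::] ->
  fmass (fbind (resample P) (extend p)) = 1.
Proof.
move=> HP HP0; rewrite fmass_bind -(fmass_resample HP HP0).
by apply: eq_fexpect => u; exact: fmass_extend.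
Qed.

Lemma piw1_gt0 t b : 0 < piw p r T t b (fun _ => 1).
Proof.
rewrite piwE big_ord_recl /= (piw_len1_term _ _ t).
have [y Hy] : exists y, 0 < p [::] y.
  case: (pickP (fun y => 0 < p [::] y)) => [y Hy|Hp]; first by exists y.
  have : \sum_(x : S) p [::] x <= 0.
    by apply: sumr_le0 => x _; rewrite leNgt Hp.
  by rewrite p_norm ler10.
apply: ltr_pwDl.
  rewrite (bigD1 y) //=; apply: ltr_pwDl.
    by apply: mulr_gt0 => //; rewrite mulr1; apply: powR_gt0; apply: r_gt0.
  by apply: sumr_ge0 => x _; apply: mulr_ge0 => //; rewrite mulr1 powR_ge0.
apply: sumr_ge0 => s _; apply: sum_tuples_ge0 => x; case: ifP => _ //.
by rewrite mulr1; apply: mulr_ge0; [exact: prefprob_ge0 | exact: powR_ge0].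
Qed.

Lemma piw_step t' b0 b1 (h : seq S -> R) : (t' < T)%N ->
  t'.+1%:R * piw p r T t' b0 (fun z => (1 - alpha t'.+1) * Fc t'.+1 b0 b1 z / t'.+1%:R * h z)
  + piw p r T t' b0
      (fun u => fexpect (extend p u) (fun z => alpha t'.+1 * Fc t'.+1 b0 b1 z * h z))
  = piw p r T t'.+1 b1 h.
Proof.
move=> Ht; set al := alpha t'.+1; set F := Fc t'.+1 b0 b1.
rewrite -piwZ (@eq_piw _ _ _ _ _ t' b0 _ (fun z => (1 - al) * F z * h z)); last first.
  by move=> z; field; rewrite addrC natr1 pnatr_eq0.
rewrite !piwE; apply: (sum_ord_shift
  (A := fun s => sum_tuples s.+1 (fun x => if (s.+1 <= t'.+1)%N
     then prefprob x * rx x `^ b0 * ((1 - al) * F x * h x) else 0))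
  (B := fun s => sum_tuples s.+1 (fun x => if (s.+1 <= t'.+1)%N
     then prefprob x * rx x `^ b0 * fexpect (extend p x) (fun z => al * F z * h z) else 0))
  (C := fun s => sum_tuples s.+1 (fun x => if (s.+1 <= t'.+2)%N
     then prefprob x * rx x `^ b1 * h x else 0))).
- by apply: sum_tuples_eq0 => x; rewrite ltnS leqNgt Ht.
- rewrite (piw_len1_term _ _ t') (piw_len1_term _ _ t'.+1); apply: eq_bigr => y _.
  have := Fcorr_balance b0 b1 (ltn0Sn t') (z := [:: y]) isT.
  by rewrite /= mulr0 add0r -/al -/F => <-; ring.
move=> s Hs; rewrite !(@sum_tuples_rcons _ _ s.+1) -sum_tuplesD.
apply: eq_sum_tuples => x; have sx := size_tuple x.
case: (leqP s.+1 t'.+1) => Hst /=; last first.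
  have c1 : (s.+1 < t'.+1)%N = false by lia.
  have c2 : (s.+1 < t'.+2)%N = false by lia.
  by rewrite c1 c2 addr0.
have -> : (s.+1 < t'.+2)%N = true by lia.
rewrite fexpect_extend mulr_sumr -big_split /=; apply: eq_bigr => y _.
have zT : (1 <= size (rcons x y) <= T.+1)%N by rewrite size_rcons sx.
have := Fcorr_balance b0 b1 (ltn0Sn t') zT.
rewrite size_rcons sx pa_rcons rx_rcons (@rx_tuple _ _ r _ x) prefprob_rcons /= -/al -/F => <-.
by case: ifP => _; ring.
Qed.

Section Schedule.
Variables (next : nat -> pool R S -> R -> R) (betastar : nat -> R) (E : R).
Hypothesis next_tracks : forall t N (P : pool R S) b, (t < T)%N -> (1 <= N)%N ->
  size P = (N * t.+1)%N -> valid_pool t.+1 P ->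
  `|next t P b - betastar t.+1| <= `|b - betastar t| + E / N%:R.

Local Notation D N t := (pbsmc p r alpha next (betastar 0%N) N t).

Definition state_ok t N (st : pool R S * R) :=
  [/\ size st.1 = (N * t.+1)%N, valid_pool t.+1 st.1 &
      `|st.2 - betastar t| <= t%:R * E / N%:R].

Definition round_inv t :=
  [/\ forall N, (1 <= N)%N -> fdist_on (state_ok t N) (D N t),
      forall N, (1 <= N)%N -> fmass (D N t) = 1 &
      forall g, cvgp (fun N => D N t) (fun st => estimate st.1 g)
                     (pi_expect p r T t (betastar t) g)].

Lemma cvgp_round_beta t : (forall N, (1 <= N)%N -> fdist_on (state_ok t N) (D N t)) ->
  cvgp (fun N => D N t) snd (betastar t).
Proof.
move=> D_on; apply: (cvgp_near D_on) => eps eps0.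
have [M HM] := div_small_eventually (t%:R * E) eps0.
by exists M => N a HN N1 [_ _ Hb]; apply: le_trans Hb (HM N HN N1).
Qed.

Lemma pbsmc0E N : D N 0 = fbind (fiid N (extend p [::])) (fun P0 =>
    fret ([seq (z, rx z `^ betastar 0%N) | z <- P0], betastar 0%N)).
Proof. by []. Qed.

Lemma init_support N : (1 <= N)%N -> fdist_on (state_ok 0 N) (D N 0).
Proof.
move=> N1; rewrite pbsmc0E.
apply: (fdist_on_bind (fdist_on_fiid N (fdist_on_extend [::]))) => l [Hs Hl].
apply: fdist_on_ret; split => /=.
- by rewrite size_map Hs muln1.
- rewrite /valid_pool all_map; apply: (all_prop_all _ Hl) => z /= Hz.
  by rewrite /len_in Hz /= powR_gt0 // rx_gt0 // Hz.
- by rewrite subrr normr0 !mul0r.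
Qed.

Lemma init_mass N : (1 <= N)%N -> fmass (D N 0) = 1.
Proof.
move=> N1; rewrite pbsmc0E fmass_bind -(fmass_fiid N (fmass_extend [::])).
by apply: eq_fexpect => l; rewrite /fmass fexpect_ret.
Qed.

Lemma cvgp_init_mean h : cvgp (fun N => D N 0) (fun st => pool_mean h st.1)
  (piw p r T 0 (betastar 0%N) h).
Proof.
set w := fun z => rx z `^ betastar 0%N * h z.
have -> : piw p r T 0 (betastar 0%N) h = fexpect (extend p [::]) w.
  rewrite fexpect_extend piwE big_ord_recl /= (piw_len1_term _ _ 0).
  by rewrite [X in _ + X]big1 ?addr0 // => s _; apply: sum_tuples_eq0.
apply: cvgp_chebyshev => eps eps0.
exists (fexpect (extend p [::]) (fun z => w z ^+ 2) / eps ^+ 2) => N N1.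
rewrite pbsmc0E fprob_bind.
have := chebyshev_fiid_mean w (fdist_on_extend [::]) (fmass_extend [::]) eps0 N1.
rewrite invfM mulrA mulrAC; apply: le_trans.
rewrite [in X in _ <= X]fprobE.
apply: (ler_fexpect (fdist_on_fiid N (fdist_on_extend [::]))) => l [Hs _].
by rewrite fprobE fexpect_ret /pool_mean /= size_map Hs big_map.
Qed.

Lemma round_inv0 : round_inv 0.
Proof.
split; [exact: init_support | exact: init_mass |] => g.
have H1 : piw p r T 0 (betastar 0%N) (fun _ => 1) != 0 by rewrite gt_eqF // piw1_gt0.
exact: (cvgp_estimate init_support H1 (cvgp_init_mean g) (cvgp_init_mean _)).
Qed.

Definition step_pool t b b' (Sel B : seq (seq S)) : pool R S :=
  [seq (z, (1 - alpha t) * Fc t b b' z / t%:R) | z <- Sel]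
  ++ [seq (z, alpha t * Fc t b b' z) | z <- B].

Lemma pb_stepE N t (a : pool R S * R) : pb_step p r alpha next N t a =
  fbind (fiid N (fbind (resample a.1) (extend p))) (fun B =>
  fbind (fiid (N * t) (resample a.1)) (fun Sel =>
  fret (step_pool t a.2 (next t.-1 a.1 a.2) Sel B, next t.-1 a.1 a.2))).
Proof. by []. Qed.

Lemma pbsmcSE N t : D N t.+1 = fbind (D N t) (pb_step p r alpha next N t.+1).
Proof. by []. Qed.

Lemma step_support t N a : (t < T)%N -> (1 <= N)%N -> state_ok t N a ->
  fdist_on (state_ok t.+1 N) (pb_step p r alpha next N t.+1 a).
Proof.
case: a => P b Ht N1 [/= Hs Hg Hb]; rewrite pb_stepE /=.
apply: (fdist_on_bind (fdist_on_fiid N (fdist_on_resample_extend Hg))) => B [HBs HB].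
apply: (fdist_on_bind (fdist_on_fiid (N * t.+1) (fdist_on_resample Hg))) => Sel [HSs HSel].
have FcT z : len_in t.+2 z -> 0 < Fc t.+1 b (next t P b) z.
  by move=> /andP[z1 zt]; apply: Fcorr_gt0; rewrite // z1 (leq_trans zt).
apply: fdist_on_ret; split => /=.
- by rewrite size_cat !size_map HSs HBs [in RHS]mulnS addnC.
- rewrite valid_pool_cat /valid_pool !all_map; apply/andP; split.
    apply: (all_prop_all _ HSel) => z /= /andP[z1 zt].
    rewrite /len_in z1 (leqW zt) /= mulr_gt0 ?invr_gt0 ?ltr0n //.
    by rewrite mulr_gt0 ?onem_alpha_gt0 // FcT // /len_in z1 (leqW zt).
  apply: (all_prop_all _ HB) => z /= Hz.
  by rewrite Hz /= mulr_gt0 ?alpha_gt0 ?FcT.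
- apply: le_trans (next_tracks _ Ht N1 Hs Hg) _.
  by rewrite -natr1 !mulrDl mul1r lerD.
Qed.

Lemma step_mass t N a : (1 <= N)%N -> state_ok t N a ->
  fmass (pb_step p r alpha next N t.+1 a) = 1.
Proof.
case: a => P b N1 [/= Hs Hg Hb]; rewrite pb_stepE /=.
have HP0 := pool_neq_nil N1 Hs.
rewrite fmass_bind -(fmass_fiid N (fmass_resample_extend Hg HP0)).
apply: eq_fexpect => B; rewrite fmass_bind.
rewrite -(fmass_fiid (N * t.+1) (fmass_resample Hg HP0)).
by apply: eq_fexpect => Sel; rewrite /fmass fexpect_ret.
Qed.

Section Step.
Variable t : nat.
Hypothesis Ht : (t < T)%N.
Hypothesis IH : round_inv t.

Let Dt N := D N t.
Let bn (a : pool R S * R) := next t a.1 a.2.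

Lemma Dt_support N : (1 <= N)%N -> fdist_on (state_ok t N) (Dt N).
Proof. by case: IH => H _ _; apply: H. Qed.

Lemma Dt_mass N : (1 <= N)%N -> fmass (Dt N) = 1.
Proof. by case: IH => _ H _; apply: H. Qed.

Lemma cvgp_next_beta : cvgp Dt bn (betastar t.+1).
Proof.
apply: (cvgp_near Dt_support) => eps eps0.
have [M HM] := div_small_eventually (t.+1%:R * E) eps0.
exists M => N [P b] HN N1 [/= Hs Hg Hb]; apply: le_trans (next_tracks _ Ht N1 Hs Hg) _.
by apply: le_trans (HM N HN N1); rewrite -natr1 !mulrDl mul1r lerD.
Qed.

Lemma cvgp_Fcorr z : len_in t.+2 z ->
  cvgp Dt (fun a => Fc t.+1 a.2 (bn a) z) (Fc t.+1 (betastar t) (betastar t.+1) z).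
Proof.
move=> /andP[z1 zt]; have zT : (size z <= T.+1)%N by apply: leq_trans zt _.
have rho0 : 0 < rx z / rx (pa z).
  by apply: divr_gt0; [exact: rx_gt0 | exact: rx_pa_gt0 (leqW zT)].
have Hb := cvgp_round_beta Dt_support.
have Hnum := cvgp_mul Dt_support (cvgp_powR Dt_support rho0 Hb)
  (cvgp_powR Dt_support (rx_gt0 zT) (cvgp_sub Dt_support cvgp_next_beta Hb)).
have Hden := cvgp_add Dt_support
  (cvgp_cst Dt_support (alpha t.+1 * (if (2 <= size z)%N then 1 else 0)))
  (cvgp_mul Dt_support (cvgp_scale Dt_support (1 - alpha t.+1) (cvgp_powR Dt_support rho0 Hb))
     (cvgp_cst Dt_support (if (size z <= t.+1)%N then 1 else 0))).
have := cvgp_div Dt_support (lt0r_neq0 (Fcorr_den_gt0 (betastar t) (ltn0Sn t) z1)) Hnum Hden.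
by apply: (cvgp_ext Dt_support) => N a _ _; rewrite FcorrE.
Qed.

Lemma cvgp_resample_mean (psi : R -> R -> seq S -> R) :
  (forall z, len_in t.+1 z ->
     cvgp Dt (fun a => psi a.2 (bn a) z) (psi (betastar t) (betastar t.+1) z)) ->
  cvgp Dt (fun a => fexpect (resample a.1) (psi a.2 (bn a)))
    (pi_expect p r T t (betastar t) (psi (betastar t) (betastar t.+1))).
Proof.
move=> Hpsi; set ps := psi (betastar t) (betastar t.+1).
have HX : cvgp Dt (fun a => estimate a.1 ps) (pi_expect p r T t (betastar t) ps).
  by case: IH.
have HZ : cvgp Dt (fun a => abs_total t.+1 (fun z => psi a.2 (bn a) z - ps z)) 0.
  apply: (cvgp_sum0 Dt_support) => s; apply: (cvgp_sum0 Dt_support) => x.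
  apply: (cvgp_absdist Dt_support).
  by apply: Hpsi; rewrite /len_in size_tuple /= ltn_ord.
apply: (cvgp_approx Dt_support HX HZ) => N a N1 [Hs Hg _].
rewrite fexpect_resample -!fexpect_resample -fexpectB fexpect_resample.
exact: norm_estimate_le_abs_total Hg (pool_neq_nil N1 Hs).
Qed.

Lemma cvgp_resample_extend_mean (psi : R -> R -> seq S -> R) :
  (forall z, len_in t.+2 z ->
     cvgp Dt (fun a => psi a.2 (bn a) z) (psi (betastar t) (betastar t.+1) z)) ->
  cvgp Dt (fun a => fexpect (fbind (resample a.1) (extend p)) (psi a.2 (bn a)))
    (pi_expect p r T t (betastar t)
       (fun u => fexpect (extend p u) (psi (betastar t) (betastar t.+1)))).
Proof.
move=> Hpsi.
have := cvgp_resample_mean (psi := fun b b' u => fexpect (extend p u) (psi b b')).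
move=> /(_ _) H; apply: (cvgp_ext Dt_support _ (H _)) => [N a _ _|z /andP[z1 zt]].
  by rewrite fexpect_bind.
have H2 : cvgp Dt (fun a => \sum_(x : S) p z x * psi a.2 (bn a) (rcons z x))
    (\sum_(x : S) p z x * psi (betastar t) (betastar t.+1) (rcons z x)).
  apply: (cvgp_sum Dt_support) => x.
  by apply/(cvgp_scale Dt_support)/Hpsi; rewrite /len_in size_rcons /= ltnS.
rewrite fexpect_extend; apply: (cvgp_ext Dt_support _ H2) => N a _ _.
by rewrite fexpect_extend.
Qed.

Definition sel_term (h : seq S -> R) b b' z :=
  (1 - alpha t.+1) * Fc t.+1 b b' z / t.+1%:R * h z.
Definition ext_term (h : seq S -> R) b b' z := alpha t.+1 * Fc t.+1 b b' z * h z.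

Definition cond_mean (h : seq S -> R) (a : pool R S * R) :=
  (t.+1%:R * fexpect (resample a.1) (sel_term h a.2 (bn a))
   + fexpect (fbind (resample a.1) (extend p)) (ext_term h a.2 (bn a))) / t.+2%:R.

Definition cond_var_bound (h : seq S -> R) (eps : R) (a : pool R S * R) :=
  4 * (t.+1%:R * fexpect (resample a.1) (fun z => sel_term h a.2 (bn a) z ^+ 2)
       + fexpect (fbind (resample a.1) (extend p)) (fun z => ext_term h a.2 (bn a) z ^+ 2))
  / (t.+2%:R ^+ 2 * eps ^+ 2).

Lemma pool_mean_step_dev h N (a : pool R S * R) (Sel B : seq (seq S)) :
  (1 <= N)%N -> size Sel = (N * t.+1)%N -> size B = N ->
  pool_mean h (step_pool t.+1 a.2 (bn a) Sel B) - cond_mean h a =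
  ((\sum_(z <- Sel) sel_term h a.2 (bn a) z
      - (N * t.+1)%:R * fexpect (resample a.1) (sel_term h a.2 (bn a)))
   + (\sum_(z <- B) ext_term h a.2 (bn a) z
      - N%:R * fexpect (fbind (resample a.1) (extend p)) (ext_term h a.2 (bn a))))
  / (N%:R * t.+2%:R).
Proof.
move=> N1 HSs HBs; have N0 : 0 < N%:R :> R by rewrite ltr0n.
rewrite /pool_mean /step_pool big_cat !big_map size_cat !size_map HSs HBs /=.
have -> : (N * t.+1 + N)%:R = N%:R * t.+2%:R :> R by rewrite -natrM [in RHS]mulnS addnC.
by rewrite /cond_mean /sel_term /ext_term natrM; field; rewrite !gt_eqF.
Qed.

Lemma chebyshev_step h eps N a : 0 < eps -> (1 <= N)%N -> state_ok t N a ->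
  fprob (pb_step p r alpha next N t.+1 a)
    (fun y => eps < `|pool_mean h y.1 - cond_mean h a|)
  <= cond_var_bound h eps a / N%:R.
Proof.
case: a => P b eps0 N1 [/= Hs Hg _]; rewrite pb_stepE /=.
have HP0 := pool_neq_nil N1 Hs.
set fS := sel_term h b (bn (P, b)); set fB := ext_term h b (bn (P, b)).
set DS := resample P; set DB := fbind DS (extend p).
have N0 : 0 < N%:R :> R by rewrite ltr0n.
pose del := N%:R * t.+2%:R * eps / 2.
have del0 : 0 < del by rewrite /del !mulr_gt0 // invr_gt0 ltr0n.
apply: le_trans (fprob_pair_le
  (E1 := fun B => del < `|\sum_(z <- B) fB z - N%:R * fexpect DB fB|)
  (E2 := fun Sel => del < `|\sum_(z <- Sel) fS z - (N * t.+1)%:R * fexpect DS fS|)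
  (fdist_on_fiid N (fdist_on_resample_extend Hg)) (fdist_on_fiid _ (fdist_on_resample Hg))
  (fmass_fiid _ (fmass_resample_extend Hg HP0)) (fmass_fiid _ (fmass_resample Hg HP0)) _) _.
  move=> B Sel [HBs _] [HSs _] /=.
  rewrite (pool_mean_step_dev h (P, b) N1 HSs HBs) -/fS -/fB -/DS -/DB.
  apply: contraLR; rewrite negb_or -!leNgt => /andP[h2 h1].
  have Nt0 : 0 < N%:R * t.+2%:R :> R by rewrite mulr_gt0 ?ltr0n.
  rewrite normrM normfV (gtr0_norm Nt0) ler_pdivrMr //.
  apply: le_trans (ler_normD _ _) _.
  have -> : eps * (N%:R * t.+2%:R) = del + del by rewrite /del; field.
  exact: lerD.
apply: le_trans (lerD (chebyshev_fiid_sum fB N (fdist_on_resample_extend Hg)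
    (fmass_resample_extend Hg HP0) del0)
  (chebyshev_fiid_sum fS (N * t.+1) (fdist_on_resample Hg) (fmass_resample Hg HP0) del0)) _.
rewrite le_eqVlt; apply/orP; left; apply/eqP.
by rewrite /cond_var_bound /del natrM; field; rewrite ?gt_eqF // ltr0n.
Qed.

Lemma cvgp_sel_term h z : len_in t.+2 z ->
  cvgp Dt (fun a => sel_term h a.2 (bn a) z) (sel_term h (betastar t) (betastar t.+1) z).
Proof.
move=> Hz; have HF := cvgp_scale Dt_support (1 - alpha t.+1) (cvgp_Fcorr Hz).
have HFt := cvgp_mul Dt_support HF (cvgp_cst Dt_support t.+1%:R^-1).
exact: (cvgp_mul Dt_support HFt (cvgp_cst Dt_support (h z))).
Qed.

Lemma cvgp_ext_term h z : len_in t.+2 z ->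
  cvgp Dt (fun a => ext_term h a.2 (bn a) z) (ext_term h (betastar t) (betastar t.+1) z).
Proof.
move=> Hz; have HF := cvgp_scale Dt_support (alpha t.+1) (cvgp_Fcorr Hz).
exact: (cvgp_mul Dt_support HF (cvgp_cst Dt_support (h z))).
Qed.

Lemma cvgp_cond_mean h : cvgp Dt (cond_mean h)
  (piw p r T t.+1 (betastar t.+1) h / (piw p r T t (betastar t) (fun _ => 1) * t.+2%:R)).
Proof.
have HS := cvgp_resample_mean (fun z Hz => cvgp_sel_term h (len_inS Hz)).
have HB := cvgp_resample_extend_mean (fun z Hz => cvgp_ext_term h Hz).
have := cvgp_mul Dt_support (cvgp_add Dt_support (cvgp_scale Dt_support t.+1%:R HS) HB)
  (cvgp_cst Dt_support t.+2%:R^-1).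
rewrite -(piw_step (betastar t) (betastar t.+1) h Ht) /pi_expect.
have Z0 := piw1_gt0 t (betastar t).
have t0 : t.+1%:R != 0 :> R by rewrite pnatr_eq0.
have t2 : 2 + t%:R != 0 :> R by rewrite -natrD pnatr_eq0.
by congr cvgp; field; rewrite t2 gt_eqF.
Qed.

Lemma cvgp_cond_var_bound h eps : exists Cs, cvgp Dt (cond_var_bound h eps) Cs.
Proof.
have HS := cvgp_resample_mean (psi := fun b b' z => sel_term h b b' z ^+ 2)
  (fun z Hz => cvgp_sqr Dt_support (cvgp_sel_term h (len_inS Hz))).
have HB := cvgp_resample_extend_mean (psi := fun b b' z => ext_term h b b' z ^+ 2)
  (fun z Hz => cvgp_sqr Dt_support (cvgp_ext_term h Hz)).
have Hsum := cvgp_add Dt_support (cvgp_scale Dt_support t.+1%:R HS) HB.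
eexists; exact: (cvgp_mul Dt_support (cvgp_scale Dt_support 4 Hsum) (cvgp_cst Dt_support _)).
Qed.

Lemma cvgp_step_mean h : cvgp (fun N => D N t.+1) (fun st => pool_mean h st.1)
  (piw p r T t.+1 (betastar t.+1) h / (piw p r T t (betastar t) (fun _ => 1) * t.+2%:R)).
Proof.
apply: (cvgp_bind Dt_support Dt_mass _ (cvgp_cond_mean h)).
  move=> N a N1 Ga; split; last exact: step_mass Ga.
  exact: fdist_on_sub (step_support Ht N1 Ga) _.
move=> eps eps0; have [Cs HCs] := cvgp_cond_var_bound h eps.
by exists (cond_var_bound h eps); [exists Cs | move=> N a N1 Ga; exact: chebyshev_step].
Qed.

Lemma round_invS : round_inv t.+1.
Proof.
have D_on N : (1 <= N)%N -> fdist_on (state_ok t.+1 N) (D N t.+1).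
  move=> N1; rewrite pbsmcSE; apply: (fdist_on_bind (Dt_support N1)) => a Ga.
  exact: step_support.
split => // [N N1|g].
  rewrite pbsmcSE fmass_bind -(Dt_mass N1).
  by apply: (eq_fexpect_on (Dt_support N1)) => a Ga; exact: step_mass Ga.
have Z0 := piw1_gt0 t (betastar t); have Z10 := piw1_gt0 t.+1 (betastar t.+1).
have t0 : 0 < t.+2%:R :> R by rewrite ltr0n.
have L10 : piw p r T t.+1 (betastar t.+1) (fun _ => 1)
    / (piw p r T t (betastar t) (fun _ => 1) * t.+2%:R) != 0.
  by rewrite gt_eqF // divr_gt0 // mulr_gt0.
have := cvgp_estimate D_on L10 (cvgp_step_mean g) (cvgp_step_mean _).
by rewrite /pi_expect; congr cvgp; field; rewrite !gt_eqF.
Qed.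

End Step.

Lemma round_inv_all t : (t <= T)%N -> round_inv t.
Proof.
elim: t => [|t IHt] Ht; first exact: round_inv0.
exact/round_invS/IHt/ltnW.
Qed.

Lemma pbsmc_estimate_conv t g : (t <= T)%N ->
  conv_prob (fun N => D N t) (fun st => estimate st.1 g) (pi_expect p r T t (betastar t) g).
Proof.
by move=> Ht; case: (round_inv_all Ht) => D_on _ Hc; exact: (cvgp_conv_prob D_on (Hc g)).
Qed.

Lemma pbsmc_beta_conv t : (t <= T)%N -> conv_prob (fun N => D N t) snd (betastar t).
Proof.
move=> Ht; case: (round_inv_all Ht) => D_on _ _.
exact: (cvgp_conv_prob D_on (cvgp_round_beta D_on)).
Qed.

End Schedule.

Lemma sum_sqr_share_le (I : eqType) (s : seq I) (g : I -> R) (lo hi : R) : 0 < lo ->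
  {in s, forall i, lo <= g i <= hi} ->
  \sum_(i <- s) (g i / \sum_(j <- s) g j) ^+ 2 <= hi / ((size s)%:R * lo).
Proof.
move=> lo0 Hg; case: s Hg => [|i0 s'] Hg; first by rewrite big_nil /= mul0r invr0 mulr0.
set s := i0 :: s' in Hg *; set tot := \sum_(j <- s) g j.
have tot_ge : (size s)%:R * lo <= tot.
  rewrite /tot -sum1_size natr_sum mulr_suml big_seq [X in _ <= X]big_seq.
  by apply: ler_sum => i /Hg /andP[h _]; rewrite mul1r.
have tot0 : 0 < tot by apply: lt_le_trans tot_ge; rewrite mulr_gt0 ?ltr0n.
have g_ge0 i : i \in s -> 0 <= g i.
  by move=> /Hg /andP[h _]; apply: le_trans h; exact: ltW.
have hi0 : 0 <= hi.
  by have /andP[_ h] := Hg i0 (mem_head _ _); apply: le_trans h; exact: g_ge0 (mem_head _ _).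
apply: le_trans (_ : \sum_(i <- s) g i / tot * (hi / tot) <= _).
  rewrite big_seq [X in _ <= X]big_seq; apply: ler_sum => i si.
  have gi0 : 0 <= g i / tot by apply: divr_ge0; [exact: g_ge0 | exact: ltW].
  have /andP[_ gi_hi] := Hg i si.
  by rewrite expr2 ler_wpM2l // ler_pM2r ?invr_gt0.
rewrite -mulr_suml -mulr_suml -/tot divff ?gt_eqF // mul1r.
by rewrite ler_wpM2l // lef_pV2 ?posrE ?mulr_gt0 ?ltr0n.
Qed.

Lemma adaptive_next_tracks gamma c t N (P : pool R S) b : 0 < gamma ->
  (t < T)%N -> (1 <= N)%N -> size P = (N * t.+1)%N -> valid_pool t.+1 P ->
  `|adaptive_next r gamma t P b - (c + gamma)|
    <= `|b - c| + gamma * (1 + Rmax / Rmin) / N%:R.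
Proof.
move=> g0 Ht N1 Hs Hg; rewrite /adaptive_next.
set C := (size P)%:R; set sigma := \sum_(zw <- P) (r zw.1 / \sum_(yw <- P) r yw.1) ^+ 2.
have N0 : 0 < N%:R :> R by rewrite ltr0n.
have NC : N%:R <= C by rewrite /C ler_nat Hs leq_pmulr.
have C0 : 0 < C := lt_le_trans N0 NC.
have sig0 : 0 <= sigma by rewrite sumr_ge0 // => zw _; rewrite sqr_ge0.
have Rmax0 : 0 <= Rmax.
  case: P Hs Hg {C sigma NC C0 sig0} (pool_neq_nil N1 Hs) => [//|[z w] P] _.
  move=> /andP[/andP[/andP[z1 zt] _] _] _.
  have zT : (1 <= size z <= T.+1)%N by rewrite z1 /=; apply: leq_trans zt _; exact: ltnW.
  have /andP[h1 h2] := r_bnd zT; apply: le_trans h2; apply: le_trans h1; exact: ltW.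
have sig_le : sigma <= Rmax / Rmin / N%:R.
  apply: le_trans (sum_sqr_share_le (g := fun zw => r zw.1) Rmin_gt0 _) _.
    move=> zw /(allP Hg) /andP[/andP[z1 zt] _]; apply: r_bnd.
    by rewrite z1 /=; apply: leq_trans zt _; exact: ltnW.
  rewrite -/C -[X in _ <= X]mulrA -invfM ler_wpM2l // lef_pV2 ?posrE ?mulr_gt0 //.
  by rewrite mulrC ler_pM2r.
have iC : C^-1 <= N%:R^-1 by rewrite lef_pV2 ?posrE.
have -> : b + gamma * (1 - (sigma - 1 / C)) - (c + gamma) =
    (b - c) + gamma * (C^-1 - sigma) by ring.
apply: le_trans (ler_normD _ _) _; rewrite lerD2l normrM gtr0_norm // -mulrA.
rewrite (ler_pM2l g0) mulrDl mul1r; apply: le_trans (ler_normB _ _) _.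
have Ci0 : 0 <= C^-1 by rewrite invr_ge0 ltW.
by rewrite (ger0_norm Ci0) (ger0_norm sig0); apply: lerD.
Qed.
End Model.

Theorem theorem1 (R : realType) (S : finType) (T : nat)
    (p : seq S -> S -> R) (r : seq S -> R) (Rmin Rmax : R) (alpha : nat -> R)
    (p_ge0 : forall (u : seq S) (x : S), 0 <= p u x)
    (p_norm : forall u : seq S, \sum_(x : S) p u x = 1)
    (Rmin_gt0 : 0 < Rmin)
    (r_bnd : forall z : seq S, (1 <= size z <= T.+1)%N -> Rmin <= r z <= Rmax)
    (alpha_bnd : forall t : nat, 0 < alpha t < 1) :
  (* fixed powers *)
  (forall betas : nat -> R, (forall t, (t <= T)%N -> 0 <= betas t) ->
    forall t : nat, (t <= T)%N -> forall f : seq S -> R,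
      conv_prob (fun N => pbsmc p r alpha (@fixed_next R S betas) (betas 0%N) N t)
                (fun st => estimate st.1 f)
                (pi_expect p r T t (betas t) f))
  /\
  (* adaptive powers *)
  (forall (gamma beta0 : R), 0 < gamma -> 0 <= beta0 ->
    exists betastar : nat -> R,
      forall t : nat, (t <= T)%N ->
        conv_prob (fun N => pbsmc p r alpha (adaptive_next r gamma) beta0 N t)
                  (fun st => st.2) (betastar t)
        /\
        forall f : seq S -> R,
          conv_prob (fun N => pbsmc p r alpha (adaptive_next r gamma) beta0 N t)
                    (fun st => estimate st.1 f)
                    (pi_expect p r T t (betastar t) f)).
Proof.
split.
- move=> betas _ t Ht f; apply: (pbsmc_estimate_conv p_ge0 p_norm Rmin_gt0 r_bnd alpha_bnd
    (E := 0) _ f Ht) => t' N P b _ _ _ _.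
  by rewrite /fixed_next subrr normr0 mul0r addr0.
- move=> gamma beta0 g0 _.
  pose betastar t := iter t (fun b => b + gamma) beta0.
  have tracks t N (P : pool R S) b : (t < T)%N -> (1 <= N)%N ->
      size P = (N * t.+1)%N -> valid_pool t.+1 P ->
      `|adaptive_next r gamma t P b - betastar t.+1|
        <= `|b - betastar t| + gamma * (1 + Rmax / Rmin) / N%:R.
    exact: adaptive_next_tracks.
  exists betastar => t Ht; split => [|f].
  + exact: (pbsmc_beta_conv p_ge0 p_norm Rmin_gt0 r_bnd alpha_bnd tracks Ht).
  + exact: (pbsmc_estimate_conv p_ge0 p_norm Rmin_gt0 r_bnd alpha_bnd tracks f Ht).
Qed.
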